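(* Let $b_n=\max\{\alpha_1(\lambda)\colon \lambda\in P(n)\}$, where $\alpha_1(\lambda)$ is the number of distinct parts of $\lambda$. Then, as formal power series in $q$, \[ \sum_{n\geq 0} b_n q^n=\frac{1}{1-q}\left(\frac{(q^2;q^2)^2_{\infty}}{(q;q)_{\infty}}-1\right). \]
   Context: $P(n)$ is the set of partitions of $n$ (with $P(0)$ containing only the empty partition). Equivalently, $\alpha_1(\lambda)$ is the number of cells of the Young diagram of $\lambda$ with hook length $1$. The notation $(a;q)_\infty=\prod_{i\geq 0}(1-aq^i)$, so $(q;q)_\infty=(1-q)(1-q^2)(1-q^3)\cdots$ and $(q^2;q^2)_\infty=(1-q^2)(1-q^4)(1-q^6)\cdots$. *)

From HB Require Import structures.
From mathcomp Require Import all_boot all_order all_algebra.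
From mathcomp Require Import boolp.
From mathcomp Require Import zify.

Set Implicit Arguments.
Unset Strict Implicit.
Unset Printing Implicit Defensive.

Import GRing.Theory.

Definition is_partition (n : nat) (s : seq nat) : bool :=
  [&& sorted geq s, all (fun x => 0 < x) s & sumn s == n].

(* alpha_1(lambda) = number of distinct parts of lambda
   (= number of cells of hook length 1). *)
Definition alpha1 (s : seq nat) : nat := size (undup s).

Definition attained (n k : nat) : bool :=
  `[< exists s, is_partition n s /\ alpha1 s = k >].

Lemma attained_ex (n : nat) : exists k, attained n k.
Proof.
exists (alpha1 (nseq n 1)); apply/asboolP; exists (nseq n 1); split => //.
apply/and3P; split.
- by elim: n => //= -[|n] //= ->; rewrite andbT.
- by apply/allP => x /nseqP [-> _].
- by apply/eqP; elim: n => //= n ->.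
Qed.

Lemma alpha1_le (n : nat) (s : seq nat) : is_partition n s -> alpha1 s <= n.
Proof.
case/and3P => _ Hpos /eqP <-.
apply: leq_trans (size_undup s) _.
elim: s Hpos => //= x s IH /andP [Hx Hs].
by have := IH Hs; lia.
Qed.

Lemma attained_bound (n : nat) : forall k, attained n k -> k <= n.
Proof. by move=> k /asboolP [s [Hs <-]]; exact: alpha1_le. Qed.

Definition b (n : nat) : nat := ex_maxn (attained_ex n) (@attained_bound n).

Local Open Scope ring_scope.

Definition fps := nat -> rat.

Definition fps_one : fps := fun n => (n == 0%N)%:R.
Definition fps_sub (f g : fps) : fps := fun n => f n - g n.
Definition fps_mul (f g : fps) : fps :=
  fun n => \sum_(i < n.+1) f i * g (n - i)%N.
Definition fps_of_poly (p : {poly rat}) : fps := fun n => p`_n.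

Fixpoint inv_seq (f : fps) (n : nat) : seq rat :=
  match n with
  | 0 => [:: (f 0%N)^-1]
  | n'.+1 => let s := inv_seq f n' in
      rcons s (- (f 0%N)^-1 * \sum_(i < n) f i.+1 * nth 0 s (n' - i)%N)
  end.

Definition fps_inv (f : fps) : fps := fun n => nth 0 (inv_seq f n) n.

(* (q^m;q^m)_oo = prod_{i>=0} (1 - q^{m(i+1)}), for m >= 1.
   Its n-th coefficient is that of the finite product over the factors
   with i < n+1 (all factors with i >= n contribute only to degrees > n). *)
Definition qpoch_inf (m : nat) : fps :=
  fun n => (\prod_(0 <= i < n.+1) (1 - 'X^(m * i.+1)%N) : {poly rat})`_n.

(* A partition with k distinct parts has at least 1 + 2 + ... + k = T_k cells,
   and a staircase with its top part enlarged shows that T_k cells suffice, so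
   b_n is the largest k with T_k <= n.  Thus b jumps by one exactly at the
   triangular numbers, i.e. (1 - q) sum_n b_n q^n = psi(q) - 1 with
   psi(q) = sum_k q^(T_k), and the theorem is Gauss's identity
   psi(q) (q;q)_oo = (q^2;q^2)_oo^2.
   The latter is the limit N -> oo of the finite Jacobi triple product at z = q,
     sum_(-N <= k <= N) q^(k(k+1)/2) [2N, N+k]_q = prod_(i < N) (1 + q^i)(1 + q^(i+1)),
   proved by induction on N from the two q-Pascal rules.  Multiplied by
   (q;q)_N^2, its right side becomes 2 (q^2;q^2)_N (q^2;q^2)_(N-1) (1 - q^N),
   while modulo q^M, 2M <= N, each (q;q)_N [2N, N+k]_q reduces to 1 and the
   left side to (q;q)_N (psi + psi). *)

From mathcomp Require Import all_boot all_order all_algebra.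
From mathcomp Require Import boolp zify ring.

Set Implicit Arguments.
Unset Strict Implicit.
Unset Printing Implicit Defensive.

Import GRing.Theory Num.Theory.
Local Open Scope ring_scope.

Definition fps_agree (n : nat) (f : fps) (p : {poly rat}) :=
  forall i, (i <= n)%N -> f i = p`_i.

Lemma fps_agree_mul n f g p r :
  fps_agree n f p -> fps_agree n g r -> fps_agree n (fps_mul f g) (p * r).
Proof.
move=> fp gr i le_in; rewrite /fps_mul coefM; apply: eq_bigr => j _.
have lt_ji := ltn_ord j; rewrite fp ?gr //; lia.
Qed.

Lemma fps_agree_one n : fps_agree n fps_one 1.
Proof. by move=> i _; rewrite coef1. Qed.

Lemma fps_agree_poly n f : fps_agree n f (\poly_(i < n.+1) f i).
Proof. by move=> i le_in; rewrite coef_poly ltnS le_in. Qed.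

Lemma fps_agree_eq f g :
  (forall n, exists p, fps_agree n f p /\ fps_agree n g p) -> f = g.
Proof. by move=> fg; apply: funext => n; have [p [-> // ->]] := fg n. Qed.

Lemma fps_mulC f g : fps_mul f g = fps_mul g f.
Proof.
apply: fps_agree_eq => n; exists (\poly_(i < n.+1) f i * \poly_(i < n.+1) g i).
by rewrite [X in _ /\ fps_agree _ _ X]mulrC; split; apply: fps_agree_mul;
  exact: fps_agree_poly.
Qed.

Lemma fps_mulA f g h : fps_mul f (fps_mul g h) = fps_mul (fps_mul f g) h.
Proof.
apply: fps_agree_eq => n.
exists (\poly_(i < n.+1) f i * \poly_(i < n.+1) g i * \poly_(i < n.+1) h i).
have agree_poly := @fps_agree_poly n.
split; last by do 2!apply: fps_agree_mul => //.
by rewrite -mulrA; apply: fps_agree_mul => //; apply: fps_agree_mul.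
Qed.

Lemma fps_mulr1 f : fps_mul f fps_one = f.
Proof.
apply: fps_agree_eq => n; exists (\poly_(i < n.+1) f i); split; last first.
  exact: fps_agree_poly.
by rewrite -[X in fps_agree _ _ X]mulr1; apply: fps_agree_mul;
  [exact: fps_agree_poly | exact: fps_agree_one].
Qed.

Lemma size_inv_seq f n : size (inv_seq f n) = n.+1.
Proof. by elim: n => //= n IH; rewrite size_rcons IH. Qed.

Lemma nth_inv_seq f n i : (i <= n)%N -> nth 0 (inv_seq f n) i = fps_inv f i.
Proof.
elim: n => [|n IH]; first by rewrite leqn0 => /eqP ->.
rewrite leq_eqVlt => /orP [/eqP -> //| lt_in].
by rewrite /= nth_rcons size_inv_seq lt_in IH.
Qed.

Lemma fps_invS f n :
  fps_inv f n.+1 = - (f 0%N)^-1 * \sum_(i < n.+1) f i.+1 * fps_inv f (n - i)%N.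
Proof.
rewrite {1}/fps_inv /= nth_rcons size_inv_seq ltnn eqxx; congr (_ * _).
by apply: eq_bigr => i _; rewrite nth_inv_seq // leq_subr.
Qed.

Lemma fps_mulV f : f 0%N != 0 -> fps_mul f (fps_inv f) = fps_one.
Proof.
move=> f0; apply: funext => -[|n].
  by rewrite /fps_mul big_ord1 /fps_one /fps_inv /= mulfV.
rewrite /fps_mul big_ord_recl subn0 fps_invS mulrA mulrN mulfV // mulN1r.
rewrite /fps_one /= addrC; apply/eqP; rewrite subr_eq0; apply/eqP.
by apply: eq_bigr => i _; rewrite subSS.
Qed.

Lemma fps_eq_inv_mul f g h :
  f 0%N != 0 -> fps_mul f g = h -> g = fps_mul (fps_inv f) h.
Proof.
move=> f0 <-; rewrite fps_mulA [fps_mul (fps_inv f) f]fps_mulC fps_mulV //.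
by rewrite fps_mulC fps_mulr1.
Qed.

Fixpoint tri (d : nat) : nat := if d is d'.+1 then (tri d' + d)%N else 0%N.

Lemma leq_id_tri d : (d <= tri d)%N.
Proof. by case: d => //= d; rewrite leq_addl. Qed.

Lemma ltn_tri : {homo tri : d d' / (d < d')%N}.
Proof.
apply: homo_ltn => [d d' d'' /ltn_trans | d]; first exact.
by rewrite /= -addn1 leq_add2l.
Qed.

Lemma leq_tri : {mono tri : d d' / (d <= d')%N}.
Proof. exact: leq_mono ltn_tri. Qed.

Section CongruenceModXn.
Context {R : nzRingType}.
Implicit Types (p r s : {poly R}) (M : nat).

Definition eq_modX M p r := forall i, (i < M)%N -> p`_i = r`_i.

Lemma eq_modX_sym M p r : eq_modX M p r -> eq_modX M r p.
Proof. by move=> pr i lt_iM; rewrite pr. Qed.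

Lemma eq_modX_trans M p r s : eq_modX M p r -> eq_modX M r s -> eq_modX M p s.
Proof. by move=> pr rs i lt_iM; rewrite pr ?rs. Qed.

Lemma eq_modXW M M' p r : (M' <= M)%N -> eq_modX M p r -> eq_modX M' p r.
Proof. by move=> le_M'M pr i lt_iM'; apply: pr; apply: leq_trans le_M'M. Qed.

Lemma eq_modXD M p p' r r' :
  eq_modX M p p' -> eq_modX M r r' -> eq_modX M (p + r) (p' + r').
Proof. by move=> pp' rr' i lt_iM; rewrite !coefD pp' ?rr'. Qed.

Lemma eq_modXM M p p' r r' :
  eq_modX M p p' -> eq_modX M r r' -> eq_modX M (p * r) (p' * r').
Proof.
move=> pp' rr' i lt_iM; rewrite !coefM; apply: eq_bigr => j _.
have lt_ji := ltn_ord j; rewrite pp' ?rr' //; lia.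
Qed.

Lemma eq_modX_sum M (I : Type) (s : seq I) (P : pred I) (F G : I -> {poly R}) :
  (forall i, P i -> eq_modX M (F i) (G i)) ->
  eq_modX M (\sum_(i <- s | P i) F i) (\sum_(i <- s | P i) G i).
Proof. by move=> FG k lt_kM; rewrite !coef_sum; apply: eq_bigr => i /FG ->. Qed.

Lemma eq_modX_XnM M e p r :
  eq_modX (M - e) p r -> eq_modX M ('X^e * p) ('X^e * r).
Proof. by move=> pr i lt_iM; rewrite !coefXnM; case: ltnP => // ?; apply: pr; lia. Qed.

Lemma eq_modX_XnM0 M e p : (M <= e)%N -> eq_modX M ('X^e * p) 0.
Proof. by move=> le_Me i lt_iM; rewrite coefXnM coef0 ifT //; lia. Qed.

Lemma eq_modX_1subXn M e : (M <= e)%N -> eq_modX M (1 - 'X^e) 1.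
Proof. by move=> le_Me i lt_iM; rewrite coefB coefXn; case: eqP; rewrite ?subr0 //; lia. Qed.

Lemma eq_modX_prod_1subXn M (I : Type) (s : seq I) (P : pred I) (F : I -> nat) :
  (forall i, P i -> (M <= F i)%N) ->
  eq_modX M (\prod_(i <- s | P i) (1 - 'X^(F i))) 1.
Proof.
move=> le_MF; apply: (big_ind (fun p => eq_modX M p 1)) => //.
  by move=> p r p1 r1; rewrite -(mulr1 1); apply: eq_modXM.
by move=> i /le_MF; exact: eq_modX_1subXn.
Qed.

End CongruenceModXn.

Section QProducts.
Context {R : nzRingType}.

Definition qpoch m K : {poly R} := \prod_(0 <= i < K) (1 - 'X^(m * i.+1)).

Definition psi K : {poly R} := \sum_(0 <= d < K) 'X^(tri d).

Lemma qpochS m K : qpoch m K.+1 = qpoch m K * (1 - 'X^(m * K.+1)).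
Proof. by rewrite /qpoch big_nat_recr. Qed.

Lemma qpoch1S a : qpoch 1 a.+1 = qpoch 1 a * (1 - 'X^(a.+1)).
Proof. by rewrite qpochS mul1n. Qed.

Lemma psiS K : psi K.+1 = psi K + 'X^(tri K).
Proof. by rewrite /psi big_nat_recr. Qed.

Lemma coef0_qpoch m K : (0 < m)%N -> (qpoch m K)`_0 = 1.
Proof.
move=> m_gt0; apply: (big_ind (fun p : {poly R} => p`_0 = 1)) => [|p r p1 r1|i _].
- by rewrite coef1.
- by rewrite coef0M p1 r1 mulr1.
- rewrite coefB coef1 coefXn (_ : (0 == m * i.+1)%N = false) ?subr0 //.
  by apply/eqP; nia.
Qed.

Lemma qpoch1_neq0 a : qpoch 1 a != 0.
Proof.
apply/eqP => qpoch0; have := @coef0_qpoch 1 a isT.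
by rewrite qpoch0 coef0 => /eqP; rewrite eq_sym oner_eq0.
Qed.

Lemma eq_modX_qpoch m K K' :
  (0 < m)%N -> (K <= K')%N -> eq_modX K (qpoch m K) (qpoch m K').
Proof.
move=> m_gt0 le_KK'; rewrite /qpoch (big_cat_nat (leq0n K) le_KK') /=.
rewrite -[X in eq_modX _ X]mulr1; apply: eq_modXM => //; apply: eq_modX_sym.
by rewrite big_nat_cond; apply: eq_modX_prod_1subXn => i /andP [/andP [le_Ki _] _]; nia.
Qed.

Lemma eq_modX_psi K K' : (K <= K')%N -> eq_modX K (psi K) (psi K').
Proof.
move=> le_KK'; rewrite /psi (big_cat_nat (leq0n K) le_KK') /=.
rewrite -[X in eq_modX _ X]addr0; apply: eq_modXD => // i lt_iK.
rewrite coef0 coef_sum big_nat big1 // => d /andP [le_Kd _].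
by rewrite coefXn; have := leq_id_tri d; case: eqP => //; lia.
Qed.

End QProducts.

Section GaussianBinomials.
Context {R : idomainType}.

Definition qfall n a : {poly R} := \prod_(0 <= i < a) (1 - 'X^(n - i)).

Fixpoint qbin (n k : nat) {struct n} : {poly R} :=
  match k, n with
  | 0, _ => 1
  | k'.+1, 0 => 0
  | k'.+1, n'.+1 => 'X^(n' - k') * qbin n' k' + qbin n' k'.+1
  end.

Lemma qbin0 n : qbin n 0 = 1.
Proof. by case: n. Qed.

Lemma qbinS n k : qbin n.+1 k.+1 = 'X^(n - k) * qbin n k + qbin n k.+1.
Proof. by []. Qed.

Lemma qbin_eq0 n k : (n < k)%N -> qbin n k = 0.
Proof. by elim: n k => [|n IH] [|k] //= lt_nk; rewrite !IH ?mulr0 ?addr0 //; lia. Qed.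

Lemma qfallS n a : qfall n a.+1 = qfall n a * (1 - 'X^(n - a)).
Proof. by rewrite /qfall big_nat_recr. Qed.

Lemma qfallSS n a : qfall n.+1 a.+1 = (1 - 'X^(n.+1)) * qfall n a.
Proof. by rewrite /qfall big_nat_recl. Qed.

Lemma qfall_eq0 n a : (n < a)%N -> qfall n a = 0.
Proof.
move=> lt_na; rewrite /qfall (big_cat_nat (leq0n n) (ltnW lt_na)) /=.
by rewrite [X in _ * X]big_ltn // subnn expr0 subrr mul0r mulr0.
Qed.

Lemma qbin_qpoch n a : qbin n a * qpoch 1 a = qfall n a.
Proof.
elim: n a => [|n IH] [|a].
- by rewrite /qpoch /qfall !big_geq // mulr1.
- by rewrite mul0r qfall_eq0.
- by rewrite qbin0 /qpoch /qfall !big_geq // mulr1.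
rewrite qbinS mulrDl IH qpoch1S mulrA -(mulrA _ (qbin n a)) IH qfallS qfallSS.
have [le_an | lt_na] := leqP a n; last by rewrite qfall_eq0 // !(mulr0, mul0r, addr0).
have -> : 'X^(n.+1) = 'X^(n - a) * 'X^(a.+1) :> {poly R}.
  by rewrite -exprD; congr (_ ^+ _); lia.
ring.
Qed.

Lemma qbinS_dual n k : qbin n.+1 k.+1 = qbin n k + 'X^(k.+1) * qbin n k.+1.
Proof.
apply: (mulIf (qpoch1_neq0 k.+1)).
rewrite qbin_qpoch mulrDl -mulrA qbin_qpoch qpoch1S mulrA qbin_qpoch qfallSS qfallS.
have [le_kn | lt_nk] := leqP k n; last by rewrite qfall_eq0 // !(mulr0, mul0r, addr0).
have -> : 'X^(n.+1) = 'X^(k.+1) * 'X^(n - k) :> {poly R}.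
  by rewrite -exprD; congr (_ ^+ _); lia.
ring.
Qed.

Lemma qfall_qpoch n a : (a <= n)%N -> qfall n a * qpoch 1 (n - a) = qpoch 1 n.
Proof.
elim: a => [|a IH] le_an; first by rewrite /qfall big_geq // mul1r subn0.
have n_a : (n - a = (n - a.+1).+1)%N by lia.
by rewrite qfallS -mulrA -(IH (ltnW le_an)) [in RHS]n_a qpoch1S -n_a [_ * qpoch _ _]mulrC.
Qed.

Lemma qbin_sym n a : (a <= n)%N -> qbin n a = qbin n (n - a).
Proof.
move=> le_an; apply: (mulIf (mulf_neq0 (qpoch1_neq0 a) (qpoch1_neq0 (n - a)))).
rewrite mulrA qbin_qpoch qfall_qpoch // [qpoch 1 a * _]mulrC mulrA qbin_qpoch.
by rewrite -{2}(subKn le_an) qfall_qpoch ?leq_subr.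
Qed.

(* (q;q)_N [n, a] = (q;q)_N / (q;q)_a * (q;q)_n / (q;q)_(n-a) is a product of
   factors 1 - q^e with e > a *)
Lemma eq_modX_qpoch_qbin a N n :
  (a <= N)%N -> (a.*2 <= n)%N -> eq_modX a.+1 (qpoch 1 N * qbin n a) 1.
Proof.
move=> le_aN le_2an.
rewrite /qpoch (big_cat_nat (leq0n a) le_aN) /= mulrC mulrA -/(qpoch 1 a) qbin_qpoch.
rewrite -[X in eq_modX _ _ X](mulr1 1); apply: eq_modXM.
  rewrite /qfall big_nat_cond; apply: eq_modX_prod_1subXn => i /andP [/andP [_ lt_ia] _].
  by move: le_2an; rewrite -addnn; lia.
by rewrite big_nat_cond; apply: eq_modX_prod_1subXn => i /andP [/andP [le_ai _] _]; lia.
Qed.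

End GaussianBinomials.

Section FiniteJacobiTripleProduct.
Context {R : idomainType}.

(* the exponent k(k+1)/2 for k = j - N, which equals T_(-k-1) when k < 0 *)
Definition tri_at N j : nat := if (N <= j)%N then tri (j - N) else tri (N - j.+1).

Definition jtp_term N j : {poly R} := 'X^(tri_at N j) * qbin N.*2 j.

Definition jtp_term_pred N j : {poly R} := if j is j'.+1 then jtp_term N j' else 0.

Definition jtp_sum N : {poly R} := \sum_(0 <= j < N.*2.+1) jtp_term N j.

Lemma tri_at_step N j : (tri_at N j.+1 + N = tri_at N j + j.+1)%N.
Proof.
rewrite /tri_at; have [le_Nj | lt_jN] := leqP N j.
  by rewrite leqW // subSn //=; lia.
rewrite leq_eqVlt in lt_jN; case/orP: lt_jN => [/eqP <-|lt_j1N].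
  by rewrite leqnn subnn.
rewrite leqNgt lt_j1N /= (_ : N - j.+1 = (N - j.+2).+1)%N /=; lia.
Qed.

Lemma tri_atSS N j : tri_at N.+1 j.+1 = tri_at N j.
Proof. by rewrite /tri_at ltnS subSS. Qed.

Lemma tri_atS0 N : tri_at N.+1 0 = (N + tri_at N 0)%N.
Proof. by rewrite /tri_at /=; case: N => //= N; rewrite subn1 /= addnC. Qed.

Lemma jtp_term_eq0 N j : (N.*2 < j)%N -> jtp_term N j = 0.
Proof. by move=> lt_2Nj; rewrite /jtp_term qbin_eq0 // mulr0. Qed.

Lemma jtp_termS N j : (j <= N.*2.+1)%N ->
  jtp_term N.+1 j.+1 = 'X^(N.+1) * jtp_term_pred N j
    + (1 + 'X^(N.*2.+1)) * jtp_term N j + 'X^N * jtp_term N j.+1.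
Proof.
move=> le_j; rewrite /jtp_term tri_atSS doubleS qbinS qbinS_dual.
have step := tri_at_step N j.
case: j le_j step => [|j] le_j step.
  rewrite /= !qbin0 !mulr1 mulr0 add0r subn0.
  by rewrite (mulrA 'X^N) -exprD [(N + _)%N]addnC step exprD; ring.
have step' := tri_at_step N j.
have E1 : 'X^(N.+1) * 'X^(tri_at N j)
    = 'X^(tri_at N j.+1) * 'X^(N.*2.+1 - j.+1) :> {poly R}.
  by rewrite -!exprD; congr (_ ^+ _); move: le_j step'; rewrite -addnn; lia.
have E2 : 'X^(N.*2.+1) = 'X^(N.*2.+1 - j.+1) * 'X^(j.+1) :> {poly R}.
  by rewrite -!exprD; congr (_ ^+ _); move: le_j; rewrite -addnn; lia.
have E3 : 'X^N * 'X^(tri_at N j.+2)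
    = 'X^(tri_at N j.+1) * ('X^(j.+1) * 'X) :> {poly R}.
  by rewrite -exprSr -!exprD; congr (_ ^+ _); lia.
rewrite qbinS_dual /jtp_term_pred /jtp_term (mulrA 'X^(N.+1)) E1 E2 (mulrA 'X^N) E3.
rewrite (exprS _ j.+1); ring.
Qed.

Lemma jtp_sum_widen N L : (N.*2 < L)%N -> \sum_(0 <= j < L) jtp_term N j = jtp_sum N.
Proof.
move=> lt_2NL; rewrite (big_cat_nat (leq0n _) lt_2NL) /= [X in _ + X]big_nat_cond.
by rewrite [X in _ + X]big1 ?addr0 // => j /andP [/andP [lt_2Nj _] _]; apply: jtp_term_eq0.
Qed.

Lemma jtp_sumS N : jtp_sum N.+1 = (1 + 'X^N) * (1 + 'X^(N.+1)) * jtp_sum N.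
Proof.
rewrite /jtp_sum doubleS big_nat_recl // (@eq_big_nat _ _ _ 0 N.*2.+2 _
  (fun j => 'X^(N.+1) * jtp_term_pred N j + (1 + 'X^(N.*2.+1)) * jtp_term N j
            + 'X^N * jtp_term N j.+1)); last by move=> j /andP [_ ?]; apply: jtp_termS.
rewrite !big_split /= -!mulr_sumr -/(jtp_sum N).
have pred_sum : \sum_(0 <= j < N.*2.+2) jtp_term_pred N j = jtp_sum N.
  by rewrite big_nat_recl // add0r.
have cur_sum : \sum_(0 <= j < N.*2.+2) jtp_term N j = jtp_sum N.
  by apply: jtp_sum_widen.
have next_sum : \sum_(0 <= j < N.*2.+2) jtp_term N j.+1 = jtp_sum N - jtp_term N 0.
  by rewrite -(@jtp_sum_widen N N.*2.+3) 1?[in RHS]big_nat_recl 1?addrC 1?addKr //; lia.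
have term0 : jtp_term N.+1 0 = 'X^N * jtp_term N 0.
  by rewrite /jtp_term !qbin0 !mulr1 tri_atS0 exprD.
have X2N1 : 'X^(N.*2.+1) = 'X^N * 'X^(N.+1) :> {poly R}.
  by rewrite -exprD -addnn addnS.
rewrite pred_sum cur_sum next_sum term0 X2N1; ring.
Qed.

Lemma jtp_sum_prod N : jtp_sum N = \prod_(0 <= i < N) ((1 + 'X^i) * (1 + 'X^(i.+1))).
Proof.
elim: N => [|N IH].
  by rewrite /jtp_sum big_nat1 big_geq // /jtp_term qbin0 /tri_at /= expr0 mulr1.
by rewrite jtp_sumS IH big_nat_recr //= mulrC.
Qed.

End FiniteJacobiTripleProduct.

Section GaussIdentity.
Context {R : idomainType}.

Definition jtp_exps N : {poly R} := \sum_(0 <= j < N.*2.+1) 'X^(tri_at N j).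

Lemma jtp_exps_psi N : jtp_exps N = psi N + psi N.+1.
Proof.
rewrite /jtp_exps (@big_cat_nat _ _ _ N) //=; last by rewrite -addnn; lia.
congr (_ + _).
  rewrite big_nat_rev /psi add0n big_nat_cond [in RHS]big_nat_cond.
  apply: eq_bigr => i /andP [/andP [_ lt_iN] _].
  rewrite /tri_at ifN; last by rewrite -ltnNge; lia.
  by congr 'X^(tri _); lia.
rewrite -{1}[N]add0n big_addn /psi (_ : N.*2.+1 - N = N.+1)%N; last by rewrite -addnn; lia.
by apply: eq_bigr => i _; rewrite /tri_at leq_addl addnK.
Qed.

Lemma eq_modX_jtp_sum M N : (M.*2 <= N)%N ->
  eq_modX M (qpoch 1 N * qpoch 1 N * jtp_sum N) (qpoch 1 N * jtp_exps N).
Proof.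
move=> le_2MN; rewrite /jtp_sum /jtp_exps !mulr_sumr.
rewrite big_nat_cond [X in eq_modX _ _ X]big_nat_cond.
apply: eq_modX_sum => j /andP [/andP [_ lt_j2N] _].
rewrite /jtp_term mulrA [_ * 'X^_]mulrC -mulrA [qpoch 1 N * 'X^_]mulrC.
have [le_Me | lt_eM] := leqP M (tri_at N j).
  by apply: eq_modX_trans (eq_modX_XnM0 _ le_Me) _; apply: eq_modX_sym; exact: eq_modX_XnM0.
rewrite -[X in eq_modX _ _ ('X^_ * X)]mulr1 -mulrA; apply: eq_modX_XnM.
apply: eq_modXM => //; move: le_2MN lt_j2N lt_eM; rewrite -!addnn /tri_at.
have [le_Nj | lt_jN] := leqP N j => le_2MN lt_j2N lt_eM.
  have := leq_id_tri (j - N); rewrite qbin_sym -?addnn; last by lia.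
  by move=> le_tri; apply: eq_modXW (eq_modX_qpoch_qbin _ _); rewrite -?addnn; lia.
have := leq_id_tri (N - j.+1) => le_tri.
by apply: eq_modXW (eq_modX_qpoch_qbin _ _); rewrite -?addnn; lia.
Qed.

Lemma qpoch_jtp_sum N : qpoch 1 N.+1 * qpoch 1 N.+1 * jtp_sum N.+1 =
  2%:R * qpoch 2 N.+1 * qpoch 2 N * (1 - 'X^(N.+1)) :> {poly R}.
Proof.
have sq k : 'X^(2 * k) = 'X^k * 'X^k :> {poly R} by rewrite mul2n -addnn exprD.
elim: N => [|N IH].
  rewrite jtp_sum_prod /qpoch !big_nat1 big_geq // sq expr0 expr1; ring.
rewrite jtp_sumS qpoch1S (qpochS 2 N.+1) sq.
transitivity (qpoch 1 N.+1 * qpoch 1 N.+1 * (jtp_sum N.+1 : {poly R}) *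
  ((1 - 'X^(N.+2)) * (1 - 'X^(N.+2)) * ((1 + 'X^(N.+1)) * (1 + 'X^(N.+2))))).
  by ring.
by rewrite IH (qpochS 2 N) sq; ring.
Qed.

Lemma eq_modX_gauss M N : (M.*2 <= N.+1)%N ->
  eq_modX M (2%:R * (qpoch 1 N.+1 * psi N.+1))
            (2%:R * (qpoch 2 N.+1 * qpoch 2 N.+1) : {poly R}).
Proof.
move=> le_2MN; have le_MN : (M <= N)%N by move: le_2MN; rewrite -addnn; lia.
apply: eq_modX_trans (_ : eq_modX M _ (qpoch 1 N.+1 * jtp_exps N.+1)) _.
  rewrite mulr_natl jtp_exps_psi [psi N.+2]psiS addrA !mulrDr -mulr2n.
  rewrite -[X in eq_modX _ X]addr0.
  apply: eq_modXD => //; apply: eq_modX_sym; rewrite mulrC; apply: eq_modX_XnM0.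
  by apply: leq_trans (leq_id_tri _); lia.
apply: eq_modX_trans (eq_modX_sym (eq_modX_jtp_sum le_2MN)) _.
rewrite qpoch_jtp_sum mulrA -[X in eq_modX _ _ X]mulr1.
apply: eq_modXM; last by apply: eq_modX_1subXn; lia.
by apply: eq_modXM => //; exact: eq_modXW le_MN (eq_modX_qpoch (isT : 0 < 2)%N (leqnSn N)).
Qed.

End GaussIdentity.

Definition theta : fps := fun n => (psi n.+1)`_n.

Lemma fps_agree_qpoch_inf m n N :
  (0 < m)%N -> (n < N)%N -> fps_agree n (qpoch_inf m) (qpoch m N).
Proof.
move=> m_gt0 lt_nN i le_in; rewrite /qpoch_inf -/(qpoch m i.+1).
by apply: (eq_modX_qpoch m_gt0) (ltnSn i); lia.
Qed.

Lemma fps_agree_theta n N : (n < N)%N -> fps_agree n theta (psi N).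
Proof. by move=> lt_nN i le_in; apply: eq_modX_psi (ltnSn i); lia. Qed.

Lemma gauss_fps : fps_mul (qpoch_inf 1) theta = fps_mul (qpoch_inf 2) (qpoch_inf 2).
Proof.
apply: funext => n; have lt_nN : (n < n.*2.+2)%N by rewrite -addnn; lia.
rewrite (fps_agree_mul (fps_agree_qpoch_inf _ lt_nN) (fps_agree_theta lt_nN)) //.
rewrite (fps_agree_mul (fps_agree_qpoch_inf _ lt_nN) (fps_agree_qpoch_inf _ lt_nN)) //.
have le_2n : ((n.+1).*2 <= n.*2.+2)%N by rewrite doubleS.
have := eq_modX_gauss (R := rat) le_2n (ltnSn n); rewrite !mulr_natl !coefMn.
exact: (pmulrnI (isT : 0 < 2)%N).
Qed.

Lemma decreasing_parts_bound s : sorted geq s -> all (fun x => 0 < x)%N s ->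
  (size (undup s) <= head 0%N s)%N /\ (tri (size (undup s)) <= sumn s)%N.
Proof.
elim: s => [|x s IH] //= sorted_xs /andP [x_gt0 s_pos].
have [size_head tri_sumn] := IH (path_sorted sorted_xs) s_pos.
have head_x : (head 0%N s <= x)%N.
  by case: s sorted_xs {IH size_head tri_sumn s_pos} => //= y s /andP [].
case: ifP => [_ | x_notin_s] /=.
  by split; [apply: leq_trans head_x | apply: leq_trans (leq_addl _ _)].
have lt_size_x : (size (undup s) < x)%N.
  case: s x_notin_s head_x size_head {IH tri_sumn s_pos sorted_xs} => [// | y s].
  move/negbT; rewrite inE negb_or => /andP [x_neq_y _] /= le_yx size_le.
  by apply: leq_ltn_trans size_le _; rewrite ltn_neqAle eq_sym x_neq_y.
by split=> //; rewrite addnC leq_add.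
Qed.

Lemma attained_tri n k : attained n k -> (tri k <= n)%N.
Proof.
move=> /asboolP [s [/and3P [sorted_s s_pos /eqP <-] <-]].
exact: (decreasing_parts_bound sorted_s s_pos).2.
Qed.

Fixpoint staircase (m : nat) : seq nat := if m is m'.+1 then m :: staircase m' else [::].

Lemma sumn_staircase m : sumn (staircase m) = tri m.
Proof. by elim: m => //= m ->; rewrite addnC. Qed.

Lemma size_staircase m : size (staircase m) = m.
Proof. by elim: m => //= m ->. Qed.

Lemma mem_staircase m (x : nat) : (x \in staircase m) = (0 < x <= m)%N.
Proof. by elim: m => [|m IH]; rewrite ?in_nil ?inE ?IH; lia. Qed.

Lemma staircase_uniq m : uniq (staircase m).
Proof. by elim: m => //= m ->; rewrite mem_staircase ltnn andbF. Qed.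

Lemma path_staircase a m : (m <= a)%N -> path geq a (staircase m).
Proof. by elim: m a => //= m IH a ->; rewrite IH. Qed.

(* the staircase (k+1, k, ..., 1) with its largest part enlarged to n - T_k *)
Lemma tri_attained n k : (tri k.+1 <= n)%N -> attained n k.+1.
Proof.
move=> le_tri; have lt_k_top : (k < n - tri k)%N by move: le_tri => /=; lia.
apply/asboolP; exists ((n - tri k)%N :: staircase k); split.
  apply/and3P; split; first exact: path_staircase (ltnW lt_k_top).
    rewrite /= (leq_trans _ lt_k_top) //.
    by apply/allP => x; rewrite mem_staircase => /andP [].
  by rewrite /= sumn_staircase subnK //; move: le_tri => /=; lia.
rewrite /alpha1 undup_id /= ?size_staircase // staircase_uniq andbT mem_staircase; lia.
Qed.

Lemma leq_b n k : (k <= b n)%N = (tri k <= n)%N.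
Proof.
rewrite /b; case: ex_maxnP => m attained_m max_m; apply/idP/idP => [le_km | ].
  by apply: leq_trans (attained_tri attained_m); rewrite leq_tri.
by case: k => // k /tri_attained /max_m.
Qed.

Lemma b0 : b 0 = 0%N.
Proof. by apply/eqP; rewrite -leqn0 (leq_trans (leq_id_tri _)) // -leq_b. Qed.

Lemma bS n : b n.+1 = (b n + (tri (b n.+1) == n.+1))%N.
Proof.
have le_b : (b n <= b n.+1)%N by rewrite leq_b (leq_trans _ (leqnSn n)) // -leq_b.
have : (tri (b n.+1) <= n.+1)%N by rewrite -leq_b.
rewrite leq_eqVlt ltnS => /orP [/eqP tri_b | le_tri_b]; last first.
  rewrite (_ : _ == _ = false) ?addn0; last first.
    by apply/eqP=> tri_b; rewrite tri_b ltnn in le_tri_b.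
  by apply/anti_leq; rewrite le_b andbT leq_b.
rewrite tri_b eqxx addn1; move: tri_b; case: (b n.+1) le_b => [//|k] le_b tri_k1.
have lt_tri_k : (tri k < n.+1)%N by rewrite -tri_k1 ltn_tri.
congr _.+1; apply/anti_leq; rewrite leq_b -ltnS lt_tri_k /= -ltnS ltnNge leq_b tri_k1.
by rewrite ltnn.
Qed.

Lemma theta_b n : theta n = (tri (b n) == n)%:R.
Proof.
have lt_bn : (b n < n.+1)%N by rewrite ltnS (leq_trans (leq_id_tri _)) // -leq_b.
rewrite /theta /psi coef_sum big_mkord (bigD1 (Ordinal lt_bn)) //= coefXn eq_sym.
rewrite big1 ?addr0 // => d neq_d; rewrite coefXn; case: eqP => // n_tri.
case/eqP: neq_d; apply: val_inj => /=; apply/eqP; rewrite eqn_leq leq_b -n_tri leqnn /=.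
by rewrite -leq_tri -n_tri -leq_b.
Qed.

Lemma fps_mul_1subX_b :
  fps_mul (fps_of_poly (1 - 'X)) (fun n => (b n)%:R) = fps_sub theta fps_one.
Proof.
apply: funext => -[|n].
  by rewrite /fps_mul big_ord1 /fps_sub /fps_one theta_b b0 mulr0 subrr.
rewrite /fps_mul 2!big_ord_recl big1 => [|i _]; last first.
  by rewrite /fps_of_poly coefB coef1 coefX subrr mul0r.
rewrite /fps_of_poly !coefB !coef1 !coefX /fps_sub /fps_one theta_b subn1 /=.
by rewrite [in X in X + _]bS natrD; ring.
Qed.

Theorem mainTheorem2 :
  (fun n : nat => ((b n)%:R : rat)) =
  fps_mul (fps_inv (fps_of_poly (1 - 'X)))
          (fps_sub (fps_mul (fps_mul (qpoch_inf 2) (qpoch_inf 2))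
                            (fps_inv (qpoch_inf 1)))
                   fps_one).
Proof.
have qpoch_inf1_0 : qpoch_inf 1 0%N != 0.
  by rewrite /qpoch_inf -/(qpoch 1 1) coef0_qpoch.
have one_subX_0 : fps_of_poly (1 - 'X) 0%N != 0 by rewrite /fps_of_poly coefB coef1 coefX.
rewrite -gauss_fps (fps_mulC (qpoch_inf 1)) -fps_mulA fps_mulV // fps_mulr1.
exact: fps_eq_inv_mul one_subX_0 fps_mul_1subX_b.
Qed.
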